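(* Let $X=(x_1,\ldots,x_n)$, $\widetilde{X}=(-x_1,x_2,\ldots,x_n)$ and $X'=(x_2,\ldots,x_n)$. For any partition $\lambda\in\mathcal{E}_n$ of length $\ell\geqslant1$, $$\sum_{i=1}^{\ell}(-1)^{i-1}\,\widetilde{P}_{\lambda\smallsetminus\{\lambda_i\}}(X)\,e_{\lambda_i}(X')=\widetilde{P}_\lambda(\widetilde{X})+(-1)^{\ell+1}\widetilde{P}_\lambda(X).$$
   Context: $\mathcal{E}_n$ is the set of all (not necessarily strict) partitions with all parts $\leqslant n$. $e_k$ denotes the $k$-th elementary symmetric polynomial. For a list of variables $Y$: $\widetilde{P}_0(Y)=1$, $\widetilde{P}_i(Y)=e_i(Y)/2$ for $i>0$; for $i\geqslant j\geqslant0$, $\widetilde{P}_{i,j}(Y)=\widetilde{P}_i\widetilde{P}_j+2\sum_{k=1}^{j-1}(-1)^k\widetilde{P}_{i+k}\widetilde{P}_{j-k}+(-1)^j\widetilde{P}_{i+j}$; for a partition $\mu$ of length $m$, $\widetilde{P}_\mu(Y)=\mathrm{Pfaffian}[\widetilde{P}_{\mu_i,\mu_j}(Y)]_{1\leqslant i<j\leqslant 2\lfloor(m+1)/2\rfloor}$ (with $\mu_{m+1}=0$; $\widetilde P$ of the empty partition is $1$). $\lambda\smallsetminus\{\lambda_i\}$ denotes the partition obtained from $\lambda$ by removing its $i$-th part. *)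

From mathcomp Require Import all_boot all_algebra.
From mathcomp Require Export mpoly.
Set Implicit Arguments. Unset Strict Implicit. Unset Printing Implicit Defensive.
Import GRing.Theory.
Local Open Scope ring_scope.

Definition rem_at {T : Type} (i : nat) (s : seq T) : seq T := take i s ++ drop i.+1 s.

Section Ptilde.
Variable R : comAlgType rat.

Definition elsym (k : nat) (Y : seq R) : R :=
  \sum_(I : {set 'I_(size Y)} | #|I| == k) \prod_(i in I) Y`_i.

Definition Pt1 (Y : seq R) (i : nat) : R :=
  if i == 0%N then 1 else (2%:R^-1 : rat) *: elsym i Y.

Definition Pt2 (Y : seq R) (i j : nat) : R :=
  if j == 0%N then Pt1 Y i else
  Pt1 Y i * Pt1 Y j
  + 2%:R * \sum_(1 <= k < j) (-1) ^+ k * Pt1 Y (i + k) * Pt1 Y (j - k)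
  + (-1) ^+ j * Pt1 Y (i + j).

(* Pfaffian of the skew matrix [f (s_a) (s_b)]_{a<b}, by expansion along the first row *)
Fixpoint pfaux (fuel : nat) (f : nat -> nat -> R) (s : seq nat) : R :=
  match fuel, s with
  | 0%N, _ => 1
  | _, [::] => 1
  | fuel'.+1, a :: t =>
      \sum_(j < size t) (-1) ^+ j * f a (nth 0%N t j) * pfaux fuel' f (rem_at j t)
  end.

Definition pfaffian (f : nat -> nat -> R) (s : seq nat) : R := pfaux (size s) f s.

Definition Ptilde (Y : seq R) (mu : seq nat) : R :=
  pfaffian (Pt2 Y) (if odd (size mu) then rcons mu 0%N else mu).

End Ptilde.

From mathcomp Require Import all_boot all_algebra.
From mathcomp Require Import mpoly.
From mathcomp Require Import ring zify.
Set Implicit Arguments. Unset Strict Implicit. Unset Printing Implicit Defensive.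
Import GRing.Theory.
Local Open Scope ring_scope.

(* Write P_k, P'_k, e_k for P~_k(X), P~_k(X~), e_k(X').  Since e_k(X) = e_k(X') + x_1 e_{k-1}(X'),
   one has P'_k = e_k - P_k for k > 0, and a telescoping computation shows that the Pfaffian
   entries change by a rank-two skew term: P'_{i,j} = P_{i,j} + e_i P_j - P_i e_j for i, j > 0.
   Pfaffians are handled through the contraction operators
     C_v K (t) = sum_k (-1)^k v(t_k) K(t minus t_k),
   which anticommute and square to zero; the first-row expansion reads pf(a :: t) = C_{f a} pf t,
   and the Pfaffian of a rank-two perturbation f + w /\ v is pf_f + C_w C_v pf_f.
   The left-hand side of the identity is C_e P~(X) evaluated at lambda, while padding an odd
   partition with a zero turns P~ into C_P pf.  Comparing both sides separately for lambda of
   even and of odd length, all the terms with a repeated or sandwiched contraction vanish. *)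

Lemma size_rem_at T k (t : seq T) : (k < size t)%N -> size (rem_at k t) = (size t).-1.
Proof. by rewrite /rem_at size_cat size_take size_drop => kt; rewrite kt; lia. Qed.

Lemma odd_size_rem_at T k (t : seq T) :
  (k < size t)%N -> odd (size (rem_at k t)) = ~~ odd (size t).
Proof. by move=> kt; rewrite size_rem_at //; case: (size t) kt => //= m _; rewrite negbK. Qed.

Lemma mem_rem_at (T : eqType) k (t : seq T) : {subset rem_at k t <= t}.
Proof. by move=> y; rewrite /rem_at mem_cat => /orP[/mem_take|/mem_drop]. Qed.

Lemma rem_at_rcons T k (t : seq T) z :
  (k < size t)%N -> rem_at k (rcons t z) = rcons (rem_at k t) z.
Proof.
move=> kt; rewrite /rem_at -!cats1 take_cat kt drop_cat.
case: ltnP => kt'; first by rewrite catA.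
have -> : k.+1 = size t by lia.
by rewrite subnn drop0 drop_size cats0.
Qed.

Lemma rem_at_size_rcons T (t : seq T) z : rem_at (size t) (rcons t z) = t.
Proof. by rewrite /rem_at -cats1 take_size_cat // drop_cat ltnNge leqnSn subSnn cats0. Qed.

Section Contraction.
Variable R : comPzRingType.
Implicit Types (u v w : nat -> R) (K : seq nat -> R) (t : seq nat).

Definition contract v K t : R :=
  \sum_(k < size t) (-1) ^+ k * v (nth 0%N t k) * K (rem_at k t).

Lemma contract_nil v K : contract v K [::] = 0.
Proof. exact: big_ord0. Qed.

Lemma contract_cons v K a t :
  contract v K (a :: t) = v a * K t - contract v (fun s => K (a :: s)) t.
Proof.
rewrite /contract big_ord_recl expr0 mul1r -sumrN; congr (_ + _).
  by rewrite /rem_at /= drop0.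
by apply: eq_bigr => k _; rewrite lift0 exprS !mulN1r !mulNr.
Qed.

Lemma contract_rcons v K t z :
  contract v K (rcons t z) =
  contract v (fun s => K (rcons s z)) t + (-1) ^+ size t * v z * K t.
Proof.
rewrite /contract size_rcons big_ord_recr /= nth_rcons ltnn eqxx rem_at_size_rcons.
congr (_ + _); apply: eq_bigr => -[k kt] _ /=.
by rewrite nth_rcons kt rem_at_rcons.
Qed.

Lemma eq_contract_rem v K1 K2 t :
  (forall k, (k < size t)%N -> K1 (rem_at k t) = K2 (rem_at k t)) ->
  contract v K1 t = contract v K2 t.
Proof. by move=> eqK; apply: eq_bigr => k _; rewrite eqK. Qed.

Lemma eq_contract v K1 K2 t : K1 =1 K2 -> contract v K1 t = contract v K2 t.
Proof. by move=> eqK; apply: eq_contract_rem => k _. Qed.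

Lemma eq_in_contract v1 v2 K t : {in t, v1 =1 v2} -> contract v1 K t = contract v2 K t.
Proof. by move=> eqv; apply: eq_bigr => k _; rewrite eqv ?mem_nth. Qed.

Lemma contract0r v t : contract v (fun=> 0) t = 0.
Proof. by apply: big1 => k _; rewrite mulr0. Qed.

Lemma contractDl v1 v2 K t :
  contract (fun y => v1 y + v2 y) K t = contract v1 K t + contract v2 K t.
Proof. by rewrite /contract -big_split; apply: eq_bigr => k _ /=; ring. Qed.

Lemma contractBl v1 v2 K t :
  contract (fun y => v1 y - v2 y) K t = contract v1 K t - contract v2 K t.
Proof. by rewrite /contract -sumrB; apply: eq_bigr => k _ /=; ring. Qed.

Lemma contractZl c v K t : contract (fun y => c * v y) K t = c * contract v K t.
Proof. by rewrite /contract mulr_sumr; apply: eq_bigr => k _; ring. Qed.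

Lemma contractDr v K1 K2 t :
  contract v (fun s => K1 s + K2 s) t = contract v K1 t + contract v K2 t.
Proof. by rewrite /contract -big_split; apply: eq_bigr => k _ /=; ring. Qed.

Lemma contractBr v K1 K2 t :
  contract v (fun s => K1 s - K2 s) t = contract v K1 t - contract v K2 t.
Proof. by rewrite /contract -sumrB; apply: eq_bigr => k _ /=; ring. Qed.

Lemma contractNr v K t : contract v (fun s => - K s) t = - contract v K t.
Proof. by rewrite /contract -sumrN; apply: eq_bigr => k _; ring. Qed.

Lemma contractZr c v K t : contract v (fun s => c * K s) t = c * contract v K t.
Proof. by rewrite /contract mulr_sumr; apply: eq_bigr => k _; ring. Qed.

Lemma contract2_cons v w K a t :
  contract v (contract w K) (a :: t) =
  v a * contract w K t - w a * contract v K t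
  + contract v (contract w (fun s => K (a :: s))) t.
Proof.
rewrite contract_cons (eq_contract _ _ (contract_cons w K a)).
by rewrite contractBr contractZr; ring.
Qed.

Lemma contract_anticomm v w K t :
  contract v (contract w K) t = - contract w (contract v K) t.
Proof.
elim: t K => [|a t IHt] K; first by rewrite !contract_nil oppr0.
by rewrite !contract2_cons IHt; ring.
Qed.

Lemma contract_nilpotent v K t : contract v (contract v K) t = 0.
Proof.
elim: t K => [|a t IHt] K; first exact: contract_nil.
by rewrite contract2_cons IHt; ring.
Qed.

Lemma contract_nilpotent_mid v w K t : contract v (contract w (contract v K)) t = 0.
Proof.
rewrite contract_anticomm (eq_contract _ _ (contract_nilpotent v K)).
by rewrite contract0r oppr0.
Qed.

Lemma contract_comm2 u v w K t :
  contract u (contract v (contract w K)) t = contract v (contract w (contract u K)) t.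
Proof.
rewrite contract_anticomm (eq_contract _ _ (contract_anticomm u w K)).
by rewrite contractNr opprK.
Qed.

End Contraction.

Section Pfaffian.
Variable R : comAlgType rat.
Implicit Types (f g : nat -> nat -> R) (v w : nat -> R) (s t : seq nat).

Lemma pfaux_fuel f k1 k2 s :
  (size s <= k1)%N -> (size s <= k2)%N -> pfaux k1 f s = pfaux k2 f s.
Proof.
elim: k1 k2 s => [|k1 IHk] [|k2] [|a t] //= sk1 sk2.
by apply: eq_bigr => j _; rewrite (IHk k2) // size_rem_at //; lia.
Qed.

Lemma pfaffian_cons f a t : pfaffian f (a :: t) = contract (f a) (pfaffian f) t.
Proof.
rewrite /pfaffian /contract /=; apply: eq_bigr => j _.
by rewrite (@pfaux_fuel f (size t) (size (rem_at j t))) // size_rem_at //; lia.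
Qed.

Lemma pfaffian_odd f s : odd (size s) -> pfaffian f s = 0.
Proof.
elim: {s}(size s) {-2}s (leqnn (size s)) => [|m IHm] [|a t] //= sm odd_t.
rewrite pfaffian_cons (eq_contract_rem _ (K2 := fun=> 0)) ?contract0r // => k kt.
by apply: IHm; rewrite ?odd_size_rem_at ?size_rem_at //; lia.
Qed.

Lemma pfaffian_rcons f s z :
  pfaffian f (rcons s z) = contract (fun y => f y z) (pfaffian f) s.
Proof.
elim: {s}(size s) {-2}s (leqnn (size s)) => [|m IHm] [|a t] //= sm.
1,2: by rewrite pfaffian_cons !contract_nil.
rewrite pfaffian_cons contract_rcons contract_cons.
rewrite (eq_contract_rem _ (K2 := contract (fun y => f y z) (pfaffian f))); last first.
  by move=> k kt; apply: IHm; rewrite size_rem_at //; lia.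
rewrite (eq_contract _ _ (pfaffian_cons f a)) contract_anticomm addrC; congr (_ - _).
case: (boolP (odd (size t))) => [odd_t|even_t]; first by rewrite pfaffian_odd // !mulr0.
by rewrite -signr_odd (negbTE even_t) mul1r.
Qed.

Lemma pfaffian_rank2 f g w v s :
  {in s &, forall y z, g y z = f y z + w y * v z - v y * w z} ->
  pfaffian g s = pfaffian f s + contract w (contract v (pfaffian f)) s.
Proof.
elim: {s}(size s) {-2}s (leqnn (size s)) => [|m IHm] [|a t] //= sm gE.
1,2: by rewrite contract_nil addr0.
set D := contract w (contract v (pfaffian f)).
have gaE : {in t, g a =1 fun y => f a y + w a * v y - v a * w y}.
  by move=> y yt; rewrite gE ?mem_head // in_cons yt orbT.
have IHt k : (k < size t)%N ->
    pfaffian g (rem_at k t) = pfaffian f (rem_at k t) + D (rem_at k t).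
  move=> kt; apply: IHm; first by rewrite size_rem_at //; lia.
  by move=> y z /mem_rem_at yt /mem_rem_at zt; rewrite gE // in_cons ?yt ?zt orbT.
rewrite !pfaffian_cons (eq_contract_rem _ (K2 := fun s => pfaffian f s + D s) IHt).
rewrite (eq_in_contract _ gaE) contractBl contractDl !contractZl !contractDr.
rewrite contract_nilpotent_mid [contract w D t]contract_nilpotent contract_comm2.
rewrite /D contract2_cons (eq_contract _ _ (fun s => eq_contract _ s (pfaffian_cons f a))).
by rewrite !addr0; ring.
Qed.

End Pfaffian.

Lemma elsym_cons (R : comAlgType rat) (y : R) (Z : seq R) k :
  elsym k.+1 (y :: Z) = elsym k.+1 Z + y * elsym k Z.
Proof.
rewrite /elsym (bigID (fun I : {set 'I_(size Z).+1} => ord0 \in I)) /= addrC.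
have lift_inj0 := @lift_inj _ (@ord0 (size Z)).
have notin0 (J : {set 'I_(size Z)}) : ord0 \notin lift ord0 @: J.
  by apply/imsetP => -[j _ /eqP]; rewrite (negbTE (neq_lift _ _)).
have liftK (J : {set 'I_(size Z)}) : [set j | lift ord0 j \in lift ord0 @: J] = J.
  by apply/setP => j; rewrite inE mem_imset.
have unliftK (I : {set 'I_(size Z).+1}) :
    lift ord0 @: [set j | lift ord0 j \in I] = I :\ ord0.
  apply/setP => i; rewrite !inE; case: (unliftP ord0 i) => [j ->|->].
    by rewrite mem_imset // inE eq_sym neq_lift.
  by rewrite eqxx; apply/negbTE/notin0.
congr (_ + _).
  rewrite (reindex_onto (fun J : {set 'I_(size Z)} => lift ord0 @: J)
                        (fun I => [set j | lift ord0 j \in I])) /=; last first.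
    by move=> I /andP[_ I0]; rewrite unliftK; apply/setDidPl; rewrite disjoint_sym disjoints1.
  apply: eq_big => [J|J _]; first by rewrite card_imset // liftK notin0 eqxx !andbT.
  by rewrite big_imset //; apply: in2W.
rewrite mulr_sumr.
rewrite (reindex_onto (fun J : {set 'I_(size Z)} => ord0 |: (lift ord0 @: J))
                      (fun I => [set j | lift ord0 j \in I])) /=; last first.
  by move=> I /andP[_ I0]; rewrite unliftK setD1K.
apply: eq_big => [J|J _].
  rewrite setU11 cardsU1 notin0 card_imset //= add1n eqSS andbT.
  suff -> : [set j | lift ord0 j \in ord0 |: lift ord0 @: J] = J by rewrite eqxx andbT.
  by apply/setP => j; rewrite !inE eq_sym (negbTE (neq_lift _ _)) mem_imset.
by rewrite big_setU1 ?notin0 //= big_imset //; apply: in2W.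
Qed.

Section Entries.
Variable R : comAlgType rat.
Variables (x : R) (Y : seq R).

Local Notation e k := (elsym k Y).
Local Notation P := (Pt1 (x :: Y)).
Local Notation Q := (Pt1 (- x :: Y)).

Lemma elsym_Pt1_cons k : e k.+1 = 2%:R * P k.+1 - x * e k.
Proof.
rewrite /Pt1 /= elsym_cons -scaler_nat -scalerAl mul1r scalerA.
by rewrite mulfV ?scale1r ?addrK.
Qed.

Lemma Pt1_flip k : (0 < k)%N -> Q k = e k - P k.
Proof.
case: k => // k _; rewrite /Pt1 /= !elsym_cons.
have halfK (z : R) : (2%:R^-1 : rat) *: (z *+ 2) = z by rewrite -scaler_nat scalerA mulVf ?scale1r.
rewrite -{2}(halfK (e k.+1)) -scalerBr.
by have -> : e k.+1 *+ 2 - (e k.+1 + x * e k) = e k.+1 + - x * e k by ring.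
Qed.

Lemma Pt1_flip_mul a b : (0 < a)%N -> (0 < b)%N ->
  2%:R * (Q a * Q b) = 2%:R * (P a * P b) - x * (e a * e b.-1 + e a.-1 * e b).
Proof.
case: a b => [|a] [|b] // _ _; rewrite !Pt1_flip //=.
by ring: (elsym_Pt1_cons a) (elsym_Pt1_cons b).
Qed.

Lemma Pt2_flip i j : (0 < i)%N -> (0 < j)%N ->
  Pt2 (- x :: Y) i j = Pt2 (x :: Y) i j + e i * P j - P i * e j.
Proof.
case: j => // j i0 _; rewrite /Pt2 /=.
have e0 : e 0 = 1 by rewrite /elsym (big_pred1 set0) ?big_set0 // => I; rewrite /= cards_eq0.
pose u k := (-1) ^+ k.+1 * e (i + k).-1 * e (j.+1 - k).
have termE k : (1 <= k < j.+1)%N ->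
    2%:R * ((-1) ^+ k * Q (i + k) * Q (j.+1 - k)) =
    2%:R * ((-1) ^+ k * P (i + k) * P (j.+1 - k)) - x * (u k.+1 - u k).
  move=> /andP[k0 kj]; rewrite /u addnS subSS /=.
  have ik : (0 < i + k)%N by lia.
  have jk : (0 < j.+1 - k)%N by lia.
  have := Pt1_flip_mul ik jk; rewrite (_ : (j.+1 - k).-1 = j - k)%N; last lia.
  move=> flip; rewrite !exprS.
  transitivity ((-1) ^+ k * (2%:R * (Q (i + k) * Q (j.+1 - k)))); first by ring.
  by rewrite flip; ring.
have sumE : 2%:R * \sum_(1 <= k < j.+1) (-1) ^+ k * Q (i + k) * Q (j.+1 - k) =
    2%:R * \sum_(1 <= k < j.+1) (-1) ^+ k * P (i + k) * P (j.+1 - k)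
    - x * ((-1) ^+ j * e (i + j) - e i * e j).
  rewrite mulr_sumr (eq_big_nat _ _ termE) sumrB -!mulr_sumr telescope_sumr // /u.
  by rewrite addn1 subSS subnn e0 addnS /= subSS subn0 !exprS; ring.
rewrite sumE !Pt1_flip ?addnS //; try lia.
by rewrite exprS; ring: (elsym_Pt1_cons j) (elsym_Pt1_cons (i + j)).
Qed.

End Entries.

Section Identity.
Variable R : comAlgType rat.

Lemma Ptilde_even (Z : seq R) mu :
  ~~ odd (size mu) -> Ptilde Z mu = pfaffian (Pt2 Z) mu.
Proof. by rewrite /Ptilde => /negbTE ->. Qed.

Lemma Ptilde_odd (Z : seq R) mu :
  odd (size mu) -> Ptilde Z mu = contract (Pt1 Z) (pfaffian (Pt2 Z)) mu.
Proof. by rewrite /Ptilde => ->; rewrite pfaffian_rcons. Qed.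

Variables (x : R) (Y : seq R).
Local Notation e k := (elsym k Y).
Local Notation P := (Pt1 (x :: Y)).
Local Notation A := (Pt2 (x :: Y)).

Lemma sum_Ptilde_rem_at (lam : seq nat) : all (fun p => 0 < p)%N lam ->
  \sum_(i < size lam) (-1) ^+ i * Ptilde (x :: Y) (rem_at i lam) * e (nth 0%N lam i)
  = Ptilde (- x :: Y) lam + (-1) ^+ (size lam).+1 * Ptilde (x :: Y) lam.
Proof.
move=> /allP lam_pos.
have -> : \sum_(i < size lam) (-1) ^+ i * Ptilde (x :: Y) (rem_at i lam) * e (nth 0%N lam i)
    = contract (fun k => e k) (Ptilde (x :: Y)) lam by apply: eq_bigr => i _; rewrite mulrAC.
set D := contract (fun k => e k) (contract P (pfaffian A)).
have flipE s : {subset s <= lam} -> pfaffian (Pt2 (- x :: Y)) s = pfaffian A s + D s.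
  by move=> sub; apply: pfaffian_rank2 => a b /sub a0 /sub b0; apply: Pt2_flip; apply: lam_pos.
case: (boolP (odd (size lam))) => lam_odd.
- rewrite !Ptilde_odd // -signr_odd /= lam_odd expr0 mul1r.
  rewrite (eq_contract_rem _ (K2 := pfaffian A)); last first.
    by move=> k k_lt; rewrite Ptilde_even // odd_size_rem_at ?lam_odd.
  rewrite (eq_contract_rem (Pt1 (- x :: Y)) (K2 := fun s => pfaffian A s + D s)); last first.
    by move=> k _; apply: flipE; apply: mem_rem_at.
  rewrite (eq_in_contract _ (v1 := Pt1 (- x :: Y)) (v2 := fun y => e y - P y)); last first.
    by move=> y /lam_pos y0; apply: Pt1_flip.
  rewrite contractBl !contractDr contract_nilpotent contract_nilpotent_mid.
  by rewrite !addr0 subrK.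
- rewrite !Ptilde_even // flipE // -signr_odd /= (negbTE lam_odd) expr1 mulN1r addrC addKr.
  apply: eq_contract_rem => k k_lt.
  by rewrite Ptilde_odd // odd_size_rem_at ?lam_odd.
Qed.

End Identity.

Theorem proposition7 (n : nat) (hn : (0 < n)%N) (lam : seq nat)
  (hsorted : sorted geq lam)
  (hparts : all (fun p => (0 < p <= n)%N) lam)
  (hlen : (1 <= size lam)%N) :
  let X : seq {mpoly rat[n]} := [seq 'X_i | i <- enum 'I_n] in
  let Xt : seq {mpoly rat[n]} := - X`_0 :: behead X in
  let X' : seq {mpoly rat[n]} := behead X in
  \sum_(i < size lam)
     (-1) ^+ i * Ptilde X (rem_at i lam) * elsym (nth 0%N lam i) X'
  = Ptilde Xt lam + (-1) ^+ (size lam).+1 * Ptilde X lam.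
Proof.
move=> X Xt X'; rewrite /Xt /X' {Xt X'}.
have lam_pos : all (fun p => 0 < p)%N lam by apply: sub_all hparts => p /andP[].
have : (0 < size X)%N by rewrite size_map size_enum_ord.
by clearbody X; case: X => // x Y _; apply: sum_Ptilde_rem_at.
Qed.
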